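(* Let $d=1$, constants $0<c_1<1$, $c_2,c_3>0$, and $C^1$ functions $b_1:\mathbb R^2\to\mathbb R$, $b_2,f_1:\mathbb R\to\mathbb R$. Let $$b(x,a,\mathcal L_{(\xi,\alpha)})=-a+b_1(\mathbb E[\xi],\mathbb E[\alpha])+b_2(x),\quad f(x,a,\mathcal L_{(\xi,\alpha)})=\tfrac{|a|^2}{2}-c_1a\,\mathbb E[\alpha]+c_2x\,\mathbb E[\xi]+c_3x\,\mathbb E[\alpha]+f_1(x).$$ Set $\hat c_1:=\frac{c_1}{1-c_1}$, $\bar c_1:=\frac1{1-c_1}$, $\hat c_3:=\frac{c_3}{1-c_1}$, and assume that for all $(m_1,m_2)\in\mathbb R^2$ the symmetric matrix $$\begin{bmatrix}1-[\bar c_1\partial_{m_2}b_1-\hat c_1]&0&\frac12[\hat c_3-\partial_{m_1}b_1]\\0&\bar c_1\partial_{m_2}b_1-\hat c_1&\frac12[\hat c_3+\partial_{m_1}b_1]\\\frac12[\hat c_3-\partial_{m_1}b_1]&\frac12[\hat c_3+\partial_{m_1}b_1]&c_2\end{bmatrix}$$ (derivatives of $b_1$ evaluated at $(m_1,m_2)$) is positive semidefinite. Then Assumption (F) holds with $\Phi(\mathcal L_{(\xi,\eta)})=\mathcal L_{(\xi,\hat c_1\mathbb E[\eta]+\eta)}$, and $$\widehat H(x,p,\mathcal L_{(\xi,\eta)})=-\tfrac12|\hat c_1\mathbb E[\eta]+p|^2+p[b_1(\mathbb E[\xi],\bar c_1\mathbb E[\eta])+b_2(x)]+c_2x\mathbb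 E[\xi]+\hat c_3x\mathbb E[\eta]+f_1(x)$$ satisfies condition (LL-H): for all $\xi,\eta,\gamma,\zeta\in L^2(\mathcal F^1_T)$ and Lipschitz $\varphi$, $$\tilde{\mathbb E}\Big[\langle\zeta,\widehat H_{pp}(\xi)\zeta\rangle-\big\langle\eta,\widehat H_{x\rho_1}(\xi,\tilde\xi)\tilde\eta+\widehat H_{x\rho_2}(\xi,\tilde\xi)[\tilde\gamma+\tilde\zeta]\big\rangle-\big\langle\gamma-\zeta,\widehat H_{p\rho_1}(\xi,\tilde\xi)\tilde\eta+\widehat H_{p\rho_2}(\xi,\tilde\xi)[\tilde\gamma+\tilde\zeta]\big\rangle\Big]\le0.$$
   Context: Hamiltonian $H(x,p,\nu):=\inf_a[p\,b(x,a,\nu)+f(x,a,\nu)]$. Assumption (F): (i) unique minimizer $\phi(x,p,\nu)$; (ii) for all $\xi\in L^2(\mathcal F)$, $\eta\in L^2(\sigma(\xi))$ the map $\nu\mapsto\mathcal L_{(\xi,\phi(\xi,\eta,\nu))}$ has a unique fixed point $\Phi(\mathcal L_{(\xi,\eta)})$. $\widehat H(x,p,\rho):=H(x,p,\Phi(\rho))$; $\partial_{\rho_1},\partial_{\rho_2}$ are the components of the Lions derivative in $\rho\in\mathcal P_2(\mathbb R^2)$ at a point $(\tilde x,\tilde p)$ w.r.t. $\tilde x$ and $\tilde p$. Shorthand: with $\rho:=\mathcal L_{(\xi,\varphi(\xi))}$, $\widehat H_{pp}(x):=\partial_{pp}\widehat H(x,\varphi(x),\rho)$, $\widehat H_{a\rho_i}(x,\tilde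 x):=\partial_a\partial_{\rho_i}\widehat H(x,\varphi(x),\rho,\tilde x,\varphi(\tilde x))$ for $a\in\{x,p\}$. $\tilde\xi$ etc. denote independent copies on an extended probability space and $\tilde{\mathbb E}$ the expectation there; $\mathcal F^1_T$ is the $\sigma$-algebra of the idiosyncratic probability space (atomless). *)

From HB Require Import structures.
From mathcomp Require Import all_boot all_order all_algebra.
From mathcomp Require Import all_classical all_reals all_analysis.
Set Implicit Arguments.
Unset Strict Implicit.
Unset Printing Implicit Defensive.
Import Order.TTheory GRing.Theory Num.Theory numFieldNormedType.Exports.
Local Open Scope classical_set_scope.
Local Open Scope ring_scope.

Section Defs.
Context {R : realType}.

Section Space.
Context {d : measure_display} {Om : measurableType d}.
Variable P : probability Om R.

Definition atomless := forall A : set Om, measurable A -> (0 < P A)%E ->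
  exists B : set Om, [/\ measurable B, B `<=` A, (0 < P B)%E & (P B < P A)%E].

Definition L2 (X : Om -> R) :=
  measurable_fun setT X /\ (\int[P]_w ((X w) ^+ 2)%:E < +oo)%E.

Definition Ex (X : Om -> R) : R := Rintegral P setT X.

Definition sigma_meas (X Y : Om -> R) := forall B : set R, measurable B ->
  exists C : set R, measurable C /\ Y @^-1` B = X @^-1` C.

Definition is_law (X Y : Om -> R) (nu : probability (R * R)%type R) :=
  forall A : set (R * R), measurable A ->
    nu A = P ((fun w => (X w, Y w)) @^-1` A).

Definition normL2 (H1 H2 : Om -> R) : R :=
  Num.sqrt (Ex (fun w => H1 w ^+ 2 + H2 w ^+ 2)).

(* (g1, g2) = (d_{rho_1} U(rho, .), d_{rho_2} U(rho, .)) is the Lions derivative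
   of U : P_2(R^2) -> R at rho, defined through the Frechet derivative of the
   lift (X,Y) |-> U(L_{(X,Y)}) on L^2(Omega; R^2). *)
Definition LionsDer (U : probability (R * R)%type R -> R)
    (rho : probability (R * R)%type R) (g1 g2 : R * R -> R) :=
  [/\ measurable_fun setT g1, measurable_fun setT g2,
      (\int[rho]_z ((g1 z) ^+ 2)%:E < +oo)%E,
      (\int[rho]_z ((g2 z) ^+ 2)%:E < +oo)%E &
  forall X Y : Om -> R, L2 X -> L2 Y -> is_law X Y rho ->
  forall eps : R, 0 < eps -> exists2 delta : R, 0 < delta &
  forall H1 H2 : Om -> R, L2 H1 -> L2 H2 -> normL2 H1 H2 < delta ->
  forall rho' : probability (R * R)%type R,
    is_law (fun w => X w + H1 w) (fun w => Y w + H2 w) rho' ->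
    `| U rho' - U rho
       - Ex (fun w => g1 (X w, Y w) * H1 w + g2 (X w, Y w) * H2 w) |
      <= eps * normL2 H1 H2].
End Space.

Definition P2 (nu : probability (R * R)%type R) :=
  (\int[nu]_z ((z.1 ^+ 2 + z.2 ^+ 2)%:E) < +oo)%E.
Definition mean1 (nu : probability (R * R)%type R) : R := Rintegral nu setT fst.
Definition mean2 (nu : probability (R * R)%type R) : R := Rintegral nu setT snd.

Definition C1 (g : R -> R) :=
  (forall x, derivable g x 1) /\ continuous (derive1 g).
Definition pd1 (g : R -> R -> R) (m1 m2 : R) := derive1 (fun m => g m m2) m1.
Definition pd2 (g : R -> R -> R) (m1 m2 : R) := derive1 (fun m => g m1 m) m2.
Definition C1_2 (g : R -> R -> R) :=
  (forall m1 m2, derivable (fun m => g m m2) m1 1 /\ derivable (fun m => g m1 m) m2 1)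
  /\ continuous (fun z : R * R => pd1 g z.1 z.2)
  /\ continuous (fun z : R * R => pd2 g z.1 z.2).

Definition Lipschitz (g : R -> R) :=
  exists L : R, forall x y, `|g x - g y| <= L * `|x - y|.

Definition psd3 (A : 'M[R]_3) := forall v : 'cV[R]_3, 0 <= (v^T *m A *m v) 0 0.

Definition bfun (b1 : R -> R -> R) (b2 : R -> R) x a nu :=
  - a + b1 (mean1 nu) (mean2 nu) + b2 x.
Definition ffun (c1 c2 c3 : R) (f1 : R -> R) x a nu :=
  a ^+ 2 / 2 - c1 * a * mean2 nu + c2 * x * mean1 nu + c3 * x * mean2 nu + f1 x.
Definition hobj c1 c2 c3 b1 b2 f1 (x p : R) nu (a : R) :=
  p * bfun b1 b2 x a nu + ffun c1 c2 c3 f1 x a nu.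
Definition Hinf c1 c2 c3 b1 b2 f1 (x p : R) nu :=
  inf (range (hobj c1 c2 c3 b1 b2 f1 x p nu)).
Definition is_minimizer (g : R -> R) (a : R) := forall a', g a <= g a'.

Definition hc1 (c1 : R) := c1 / (1 - c1).
Definition bc1 (c1 : R) := 1 / (1 - c1).
Definition hc3 (c1 c3 : R) := c3 / (1 - c1).

Definition Hhat c1 c2 c3 (b1 : R -> R -> R) (b2 f1 : R -> R) (x p : R)
    (rho : probability (R * R)%type R) : R :=
  - (hc1 c1 * mean2 rho + p) ^+ 2 / 2
  + p * (b1 (mean1 rho) (bc1 c1 * mean2 rho) + b2 x)
  + c2 * x * mean1 rho + hc3 c1 c3 * x * mean2 rho + f1 x.

Definition condmat (c1 c2 c3 : R) (b1 : R -> R -> R) (m1 m2 : R) : 'M[R]_3 :=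
  let k := bc1 c1 * pd2 b1 m1 m2 - hc1 c1 in
  let u := (hc3 c1 c3 - pd1 b1 m1 m2) / 2 in
  let v := (hc3 c1 c3 + pd1 b1 m1 m2) / 2 in
  let rows := [:: [:: 1 - k; 0; u]; [:: 0; k; v]; [:: u; v; c2]] in
  \matrix_(i < 3, j < 3) nth 0 (nth [::] rows i) j.
End Defs.

From HB Require Import structures.
From mathcomp Require Import all_boot all_order all_algebra.
From mathcomp Require Import all_classical all_reals all_analysis.
From mathcomp Require Import ring lra measurable_realfun.
Import Order.TTheory GRing.Theory Num.Theory numFieldNormedType.Exports.
Local Open Scope classical_set_scope.
Local Open Scope ring_scope.

(* Completing the square in the control gives the unique minimizer
   a = p + c1 E[alpha]; for a law of the form L(xi, alpha) this is a linear fixed-point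
   equation for E[alpha], solved by E[alpha] = E[eta] / (1 - c1), which yields Phi and
   the explicit formula for Hhat.  Since Hhat depends on rho only through the means
   (E xi, E eta), its Lions derivatives are the gradient in the means, constant in the
   tilde variables.  The (LL-H) double expectation is then -Var(zeta) minus the quadratic
   form of the hypothesis matrix at (E zeta, E gamma, E eta), hence nonpositive. *)

Section Expectation.
Context {R : realType} {d : measure_display} {Om : measurableType d}.
Variable P : probability Om R.
Local Notation Int X := (P.-integrable setT (EFin \o X)).
Implicit Types X Y : Om -> R.

Lemma integrable_cst (k : R) : Int (fun _ => k).
Proof. exact: finite_measure_integrable_cst. Qed.

Lemma integrable_add {X Y} : Int X -> Int Y -> Int (fun w => X w + Y w).
Proof. exact: integrableD. Qed.

Lemma integrable_scale (k : R) {X} : Int X -> Int (fun w => k * X w).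
Proof. exact: integrableZl. Qed.

Lemma integrable_addl (k : R) {X} : Int X -> Int (fun w => k + X w).
Proof. by move=> iX; apply: integrable_add => //; exact: integrable_cst. Qed.

Lemma integrable_measurable X : Int X -> measurable_fun setT X.
Proof. by move/integrableP => [/measurable_EFinP]. Qed.

Lemma L2_integrable_sqr {X} : L2 P X -> Int (fun w => X w ^+ 2).
Proof.
move=> [mX fin]; apply/integrableP; split.
  by apply/measurable_EFinP; exact: measurable_funX.
by under eq_integral do rewrite /= ger0_norm ?sqr_ge0//.
Qed.

Lemma L2_of_integrable_sqr X :
  measurable_fun setT X -> Int (fun w => X w ^+ 2) -> L2 P X.
Proof.
move=> mX /integrableP [_ fin]; split => //.
by move: fin; under eq_integral do rewrite /= ger0_norm ?sqr_ge0//.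
Qed.

(* On a probability space, |X| <= 1 + X^2 gives L^2 in L^1. *)
Lemma L2_integrable {X} : L2 P X -> Int X.
Proof.
move=> hX; have [mX _] := hX.
apply/integrableP; split; first exact/measurable_EFinP.
have /integrableP[_] := integrable_addl 1 (L2_integrable_sqr hX).
apply: le_lt_trans; apply: ge0_le_integral => //.
- by apply/measurable_EFinP; exact: measurableT_comp.
- apply/measurable_EFinP; apply: measurableT_comp => //.
  by apply: measurable_funD => //; exact: measurable_funX.
- move=> w _; rewrite /= lee_fin -[X w ^+ 2]real_normK ?num_real//.
  by have := normr_ge0 (X w); rewrite [`|1 + _|]ger0_norm; nra.
Qed.

Lemma L2_addl (k : R) X : L2 P X -> L2 P (fun w => k + X w).
Proof.
move=> hX; have [mX _] := hX.
apply: L2_of_integrable_sqr; first exact: measurable_funD.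
apply: (eq_integrable _ (EFin \o fun w => k ^+ 2 + (2 * k * X w + X w ^+ 2))) => //.
  by move=> w _ /=; congr EFin; ring.
apply: integrable_addl; apply: integrable_add; last exact: L2_integrable_sqr.
exact/integrable_scale/L2_integrable.
Qed.

Lemma Ex_cst (k : R) : Ex P (fun _ => k) = k.
Proof. by rewrite /Ex Rintegral_cst// [_ setT]probability_setT mulr1. Qed.

Lemma ExD X Y : Int X -> Int Y -> Ex P (fun w => X w + Y w) = Ex P X + Ex P Y.
Proof. exact: RintegralD. Qed.

Lemma ExZ (k : R) X : Int X -> Ex P (fun w => k * X w) = k * Ex P X.
Proof. exact: RintegralZl. Qed.

Lemma Ex_addl (k : R) X : Int X -> Ex P (fun w => k + X w) = k + Ex P X.
Proof. by move=> iX; rewrite ExD ?Ex_cst//; exact: integrable_cst. Qed.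

Lemma Ex_ge0 X : (forall w, 0 <= X w) -> 0 <= Ex P X.
Proof. by move=> h; apply: Rintegral_ge0. Qed.

Lemma Ex_affine (a0 a1 a2 a3 a4 : R) (X1 X2 X3 X4 : Om -> R) :
  Int X1 -> Int X2 -> Int X3 -> Int X4 ->
  Ex P (fun w => a0 + a1 * X1 w + a2 * X2 w + a3 * X3 w + a4 * X4 w) =
  a0 + a1 * Ex P X1 + a2 * Ex P X2 + a3 * Ex P X3 + a4 * Ex P X4.
Proof.
move=> i1 i2 i3 i4.
have i01 := integrable_addl a0 (integrable_scale a1 i1).
have i012 := integrable_add i01 (integrable_scale a2 i2).
have i0123 := integrable_add i012 (integrable_scale a3 i3).
by rewrite !ExD ?Ex_cst ?ExZ//; exact: integrable_cst || exact: integrable_scale.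
Qed.

Lemma sqr_Ex_le {X} : L2 P X -> Ex P X ^+ 2 <= Ex P (fun w => X w ^+ 2).
Proof.
move=> hX; have iX := L2_integrable hX; have iX2 := L2_integrable_sqr hX.
set c := Ex P X.
have := integrable_addl (c ^+ 2) (integrable_scale (- 2 * c) iX).
have : 0 <= Ex P (fun w => (X w - c) ^+ 2) by apply: Ex_ge0 => w; exact: sqr_ge0.
have -> : (fun w => (X w - c) ^+ 2) =
    (fun w => c ^+ 2 + (- 2 * c) * X w + 1 * X w ^+ 2).
  by apply/funext => w; ring.
move=> + iXc; rewrite ExD ?Ex_addl ?ExZ -/c //; first nra.
all: exact: integrable_scale.
Qed.

Lemma normr_Ex_le_normL2 (H1 H2 : Om -> R) : L2 P H1 -> L2 P H2 ->
  `|Ex P H1| <= normL2 P H1 H2.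
Proof.
move=> h1 h2; rewrite /normL2 -sqrtr_sqr ler_sqrt; last first.
  by apply: Ex_ge0 => w; apply: addr_ge0; exact: sqr_ge0.
rewrite ExD ?(L2_integrable_sqr h1, L2_integrable_sqr h2)//.
have : 0 <= Ex P (fun w => H2 w ^+ 2) by apply: Ex_ge0 => w; exact: sqr_ge0.
by have := sqr_Ex_le h1; lra.
Qed.

Lemma normL2C (H1 H2 : Om -> R) : normL2 P H1 H2 = normL2 P H2 H1.
Proof. by rewrite /normL2; under eq_fun do rewrite addrC. Qed.

Implicit Types nu : probability (R * R)%type R.

Definition pair_mfun {X Y} (mX : measurable_fun setT X) (mY : measurable_fun setT Y) :
  {mfun Om >-> (R * R)%type} :=
  HB.pack (fun w => (X w, Y w))
    (isMeasurableFun.Build _ _ _ _ _ (measurable_fun_pair mX mY)).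

Lemma is_law_distribution {X Y} (mX : measurable_fun setT X) (mY : measurable_fun setT Y) :
  is_law P X Y (distribution P (pair_mfun mX mY)).
Proof. by []. Qed.

Lemma Rintegral_law X Y nu (g : R * R -> R) :
  measurable_fun setT X -> measurable_fun setT Y -> is_law P X Y nu ->
  measurable_fun setT g -> Int (fun w => g (X w, Y w)) ->
  Rintegral nu setT g = Ex P (fun w => g (X w, Y w)).
Proof.
move=> mX mY hl mg ig; rewrite /Ex /Rintegral; congr fine.
rewrite (eq_measure_integral (distribution P (pair_mfun mX mY))); last first.
  by move=> A mA _; exact: hl.
by rewrite integral_distribution//; exact/measurable_EFinP.
Qed.

Lemma mean1_law {X Y nu} : Int X -> Int Y -> is_law P X Y nu -> mean1 nu = Ex P X.
Proof.
move=> iX iY hl; rewrite /mean1 (@Rintegral_law X Y nu fst)//.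
- exact: integrable_measurable _ iX.
- exact: integrable_measurable _ iY.
Qed.

Lemma mean2_law {X Y nu} : Int X -> Int Y -> is_law P X Y nu -> mean2 nu = Ex P Y.
Proof.
move=> iX iY hl; rewrite /mean2 (@Rintegral_law X Y nu snd)//.
- exact: integrable_measurable _ iX.
- exact: integrable_measurable _ iY.
Qed.

Lemma P2_law X Y nu : L2 P X -> L2 P Y -> is_law P X Y nu -> P2 nu.
Proof.
move=> hX hY hl; have [mX _] := hX; have [mY _] := hY.
rewrite /P2 (eq_measure_integral (distribution P (pair_mfun mX mY))); last first.
  by move=> A mA _; exact: hl.
rewrite ge0_integral_distribution//; last first.
- by move=> z; rewrite lee_fin addr_ge0// sqr_ge0.
- apply/measurable_EFinP; apply: measurable_funD; apply: measurable_funX.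
  + exact: measurable_fst.
  + exact: measurable_snd.
have /integrableP[_] := integrable_add (L2_integrable_sqr hX) (L2_integrable_sqr hY).
by under eq_integral do rewrite /= ger0_norm ?addr_ge0 ?sqr_ge0//.
Qed.

Lemma exists_law X Y : L2 P X -> L2 P Y -> exists nu, P2 nu /\ is_law P X Y nu.
Proof.
move=> hX hY; have [mX _] := hX; have [mY _] := hY.
exists (distribution P (pair_mfun mX mY)); split; last exact: is_law_distribution.
exact: P2_law (is_law_distribution mX mY).
Qed.

End Expectation.

Section Minimization.
Context {R : realType}.
Variables (c1 c2 c3 : R) (b1 : R -> R -> R) (b2 f1 : R -> R).
Implicit Types nu rho : probability (R * R)%type R.
Local Notation hobj := (hobj c1 c2 c3 b1 b2 f1).

Definition argmin_hobj (p : R) nu : R := p + c1 * mean2 nu.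

Lemma hobj_sqr x p nu a :
  hobj x p nu a = (a - argmin_hobj p nu) ^+ 2 / 2 + hobj x p nu (argmin_hobj p nu).
Proof. by rewrite /hobj /bfun /ffun /argmin_hobj; field. Qed.

Lemma is_minimizer_hobjP x p nu a :
  is_minimizer (hobj x p nu) a <-> a = argmin_hobj p nu.
Proof.
split=> [min_a | -> a']; last first.
  by rewrite [X in _ <= X]hobj_sqr; have := sqr_ge0 (a' - argmin_hobj p nu); lra.
have := min_a (argmin_hobj p nu); rewrite hobj_sqr.
have := sqr_ge0 (a - argmin_hobj p nu) => sqr_ge0_a min_le.
have /eqP : (a - argmin_hobj p nu) ^+ 2 = 0 by lra.
by rewrite sqrf_eq0 subr_eq0 => /eqP.
Qed.

Lemma unique_minimizer_hobj x p nu : exists! a, is_minimizer (hobj x p nu) a.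
Proof.
exists (argmin_hobj p nu); split; first exact/is_minimizer_hobjP.
by move=> a /is_minimizer_hobjP.
Qed.

Lemma Hinf_argmin x p nu :
  Hinf c1 c2 c3 b1 b2 f1 x p nu = hobj x p nu (argmin_hobj p nu).
Proof.
set m := hobj x p nu (argmin_hobj p nu).
have m_lb : lbound (range (hobj x p nu)) m.
  by move=> _ [a _ <-]; exact: (is_minimizer_hobjP x p nu _).2.
apply/eqP; rewrite eq_le; apply/andP; split.
- by apply: ge_inf; [exists m | exists (argmin_hobj p nu)].
- by apply: lb_le_inf => //; exists m, (argmin_hobj p nu).
Qed.

Hypothesis c1_neq1 : c1 != 1.

Lemma hc1_mul_add e : hc1 c1 * e + e = bc1 c1 * e.
Proof. by rewrite /hc1 /bc1; field; rewrite subr_eq0 eq_sym. Qed.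

Lemma hobj_argmin_Hhat x p nu rho :
  mean1 nu = mean1 rho -> mean2 nu = bc1 c1 * mean2 rho ->
  hobj x p nu (argmin_hobj p nu) = Hhat c1 c2 c3 b1 b2 f1 x p rho.
Proof.
rewrite /hobj /bfun /ffun /argmin_hobj /Hhat /hc1 /bc1 /hc3 => -> ->.
by field; rewrite subr_eq0 eq_sym.
Qed.

End Minimization.

Section AssumptionF.
Context {R : realType} {d : measure_display} {Om : measurableType d}.
Variable P : probability Om R.
Variables (c1 c2 c3 : R) (b1 : R -> R -> R) (b2 f1 : R -> R).
Hypothesis c1_neq1 : c1 != 1.
Variables (xi eta : Om -> R).
Hypotheses (L2xi : L2 P xi) (L2eta : L2 P eta).

Local Notation Phi_eta := (fun w => hc1 c1 * Ex P eta + eta w).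

Lemma minimizer_law_fixed_point nu alpha :
  (forall w, is_minimizer (hobj c1 c2 c3 b1 b2 f1 (xi w) (eta w) nu) (alpha w)) ->
  is_law P xi alpha nu <-> is_law P xi Phi_eta nu.
Proof.
move=> min_alpha.
have -> : alpha = fun w => c1 * mean2 nu + eta w.
  apply/funext => w.
  by rewrite ((is_minimizer_hobjP c1 c2 c3 b1 b2 f1 _ _ _ _).1 (min_alpha w)) addrC.
have ixi := L2_integrable P L2xi; have ieta := L2_integrable P L2eta.
have c1_mean_Phi : is_law P xi Phi_eta nu -> c1 * mean2 nu = hc1 c1 * Ex P eta.
  move=> law; rewrite (mean2_law P ixi (integrable_addl P _ ieta) law).
  rewrite Ex_addl // /hc1; field; by rewrite subr_eq0 eq_sym.
split=> law; last by rewrite c1_mean_Phi.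
suff c1_mean : c1 * mean2 nu = hc1 c1 * Ex P eta by rewrite -c1_mean.
have : mean2 nu = c1 * mean2 nu + Ex P eta.
  by rewrite {1}(mean2_law P ixi (integrable_addl P _ ieta) law) Ex_addl.
move=> mean_eq; rewrite (_ : Ex P eta = (1 - c1) * mean2 nu) /hc1; last lra.
by field; rewrite subr_eq0 eq_sym.
Qed.

Lemma Hinf_Phi_Hhat rho nu :
  is_law P xi eta rho -> is_law P xi Phi_eta nu -> forall x p,
  Hinf c1 c2 c3 b1 b2 f1 x p nu = Hhat c1 c2 c3 b1 b2 f1 x p rho.
Proof.
move=> law_rho law_nu x p.
have ixi := L2_integrable P L2xi; have ieta := L2_integrable P L2eta.
have iPhi := integrable_addl P (hc1 c1 * Ex P eta) ieta.
rewrite Hinf_argmin (hobj_argmin_Hhat _ _ _ _ _ _ c1_neq1 _ _ _ rho)//.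
- by rewrite (mean1_law P ixi iPhi law_nu) (mean1_law P ixi ieta law_rho).
- rewrite (mean2_law P ixi iPhi law_nu) (mean2_law P ixi ieta law_rho).
  by rewrite Ex_addl// hc1_mul_add.
Qed.

End AssumptionF.

Section Calculus.
Context {R : realType}.

Lemma derive1_quadratic (f : R -> R) (a b c x : R) :
  (forall y, f y = a * y ^+ 2 + b * y + c) ->
  derivable f x 1 /\ derive1 f x = 2 * a * x + b.
Proof.
move=> fE; have -> : f = (fun y => a * y ^+ 2 + b * y + c) by apply/funext.
have df : is_derive x (1 : R) (fun y => a * y ^+ 2 + b * y + c) (2 * a * x + b).
  apply: is_derive_eq; rewrite addr0.
  by change (a * (x * 1 + x * 1) + b * 1 = 2 * a * x + b); ring.
by split; [case: df | rewrite derive1E; exact: derive_val].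
Qed.

Lemma derive1_affine (f : R -> R) (a b x : R) :
  (forall y, f y = a * y + b) -> derivable f x 1 /\ derive1 f x = a.
Proof.
move=> fE; have fE' y : f y = 0 * y ^+ 2 + a * y + b by rewrite fE; ring.
have [df ->] := derive1_quadratic f 0 a b x fE'.
by split => //; ring.
Qed.

Lemma MVT_shift (g : R -> R) : (forall x, derivable g x 1) ->
  forall a h : R, exists2 c, `|c - a| <= `|h| & g (a + h) - g a = derive1 g c * h.
Proof.
move=> dg a h.
have dgE x : is_derive x (1 : R) g (derive1 g x) by rewrite derive1E; exact: derivableP.
have cg lo hi : {within `[lo, hi], continuous g}.
  by apply: derivable_within_continuous => x _; exact: dg.
have [h_ge0 | h_lt0] := leP 0 h.
- have a_le : a <= a + h by lra.
  have [c] := MVT_segment a_le (fun x _ => dgE x) (cg _ _).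
  rewrite in_itv /= => /andP[ac ch] ->.
  by exists c; [rewrite !ger0_norm; lra | congr (_ * _); ring].
- have a_ge : a + h <= a by lra.
  have [c] := MVT_segment a_ge (fun x _ => dgE x) (cg _ _).
  rewrite in_itv /= => /andP[ac ch] gE.
  exists c; first by rewrite ler0_norm ?(ltr0_norm h_lt0); lra.
  by rewrite -opprB gE; ring.
Qed.

Lemma continuous_pair_near (f : R * R -> R) (z : R * R) : continuous f ->
  forall eps : R, 0 < eps -> exists2 del : R, 0 < del &
    forall u v : R, `|u - z.1| < del -> `|v - z.2| < del -> `|f (u, v) - f z| < eps.
Proof.
move=> cf eps eps_gt0.
have /cvgrPdist_lt/(_ eps eps_gt0)/nbhs_ballP[del del_gt0 ball_del] := cf z.
exists del => // u v hu hv; rewrite distrC; apply: (ball_del (u, v)).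
by split; rewrite /ball /= distrC.
Qed.

Lemma C1_2_first_order (g : R -> R -> R) : C1_2 g ->
  forall m y eps : R, 0 < eps -> exists2 del : R, 0 < del &
  forall h k : R, `|h| < del -> `|k| < del ->
  `|g (m + h) (y + k) - g m y - pd1 g m y * h - pd2 g m y * k| <= eps * (`|h| + `|k|).
Proof.
move=> [dg [cd1 cd2]] m y eps eps_gt0.
have [del1 del1_gt0 near1] := continuous_pair_near _ (m, y) cd1 _ eps_gt0.
have [del2 del2_gt0 near2] := continuous_pair_near _ (m, y) cd2 _ eps_gt0.
exists (Num.min del1 del2); first by rewrite lt_min del1_gt0 del2_gt0.
move=> h k; rewrite !lt_min => /andP[h1 h2] /andP[k1 k2].
have [c hc gE1] := MVT_shift _ (fun t => (dg t (y + k)).1) m h.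
have [c' hc' gE2] := MVT_shift _ (fun t => (dg m t).2) y k.
have d1_near : `|pd1 g c (y + k) - pd1 g m y| < eps.
  by apply: near1 => /=; [exact: le_lt_trans hc h1 | rewrite addrC addKr].
have d2_near : `|pd2 g m c' - pd2 g m y| < eps.
  by apply: near2 => /=; [rewrite subrr normr0 | exact: le_lt_trans hc' k2].
have -> : g (m + h) (y + k) - g m y - pd1 g m y * h - pd2 g m y * k =
    (pd1 g c (y + k) - pd1 g m y) * h + (pd2 g m c' - pd2 g m y) * k.
  have gE1' : g (m + h) (y + k) = g m (y + k) + pd1 g c (y + k) * h.
    by rewrite -gE1 /pd1; ring.
  have gE2' : g m (y + k) = g m y + pd2 g m c' * k by rewrite -gE2 /pd2; ring.
  by rewrite gE1' gE2'; ring.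
apply: (le_trans (ler_normD _ _)); rewrite !normrM mulrDr.
by apply: lerD; apply: ler_wpM2r => //; exact: ltW.
Qed.

End Calculus.

Section HhatMeans.
Context {R : realType}.
Variables (c1 c2 c3 : R) (b1 : R -> R -> R) (b2 f1 : R -> R).

Definition Hhat_means (x p m1 m2 : R) : R :=
  - (hc1 c1 * m2 + p) ^+ 2 / 2 + p * (b1 m1 (bc1 c1 * m2) + b2 x)
  + c2 * x * m1 + hc3 c1 c3 * x * m2 + f1 x.

Definition dHhat_m1 (x p m1 m2 : R) : R := p * pd1 b1 m1 (bc1 c1 * m2) + c2 * x.

Definition dHhat_m2 (x p m1 m2 : R) : R :=
  - hc1 c1 * (hc1 c1 * m2 + p) + p * (bc1 c1 * pd2 b1 m1 (bc1 c1 * m2)) + hc3 c1 c3 * x.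

Lemma Hhat_meansE x p rho :
  Hhat c1 c2 c3 b1 b2 f1 x p rho = Hhat_means x p (mean1 rho) (mean2 rho).
Proof. by []. Qed.

Lemma Hhat_means_remainder x p m1 m2 h k :
  Hhat_means x p (m1 + h) (m2 + k) - Hhat_means x p m1 m2
    - (dHhat_m1 x p m1 m2 * h + dHhat_m2 x p m1 m2 * k) =
  - (hc1 c1 ^+ 2 * k ^+ 2) / 2
  + p * (b1 (m1 + h) (bc1 c1 * m2 + bc1 c1 * k) - b1 m1 (bc1 c1 * m2)
         - pd1 b1 m1 (bc1 c1 * m2) * h - pd2 b1 m1 (bc1 c1 * m2) * (bc1 c1 * k)).
Proof.
by rewrite /Hhat_means /dHhat_m1 /dHhat_m2 [bc1 c1 * (m2 + k)]mulrDr; field.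
Qed.

Lemma Hhat_means_first_order x p m1 m2 : C1_2 b1 -> forall eps : R, 0 < eps ->
  exists2 delta : R, 0 < delta & forall h k N : R,
   `|h| <= N -> `|k| <= N -> N < delta ->
   `|Hhat_means x p (m1 + h) (m2 + k) - Hhat_means x p m1 m2
     - (dHhat_m1 x p m1 m2 * h + dHhat_m2 x p m1 m2 * k)| <= eps * N.
Proof.
move=> C1b1 eps eps_gt0.
set B := `|bc1 c1|; set K := `|p| * (1 + B) + 1.
have B_ge0 : 0 <= B by exact: normr_ge0.
have K_gt0 : 0 < K by rewrite /K; have := normr_ge0 p; nra.
have eps'_gt0 : 0 < eps / (2 * K) by apply: divr_gt0 => //; nra.
have [del0 del0_gt0 b1_near] :=
  C1_2_first_order _ C1b1 m1 (bc1 c1 * m2) _ eps'_gt0.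
have a2_gt0 : 0 < 2 * (hc1 c1 ^+ 2 + 1) by have := sqr_ge0 (hc1 c1); nra.
exists (Num.min (del0 / (1 + B)) (eps / (2 * (hc1 c1 ^+ 2 + 1)))).
  by rewrite lt_min; apply/andP; split; apply: divr_gt0 => //; nra.
move=> h k N hN kN; rewrite lt_min => /andP[N_lt_del0 N_lt_eps].
have N_ge0 : 0 <= N by exact: le_trans hN.
have NB_lt_del0 : N * (1 + B) < del0 by rewrite -ltr_pdivlMr //; nra.
have h_lt_del0 : `|h| < del0 by have := normr_ge0 k; nra.
have Bk_lt_del0 : `|bc1 c1 * k| < del0 by rewrite normrM -/B; have := normr_ge0 k; nra.
have := b1_near h (bc1 c1 * k) h_lt_del0 Bk_lt_del0.
rewrite normrM -/B; set rem := `|_ - _ - _ - _| => rem_le.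
rewrite Hhat_means_remainder; apply: (le_trans (ler_normD _ _)).
have quad_le : `|- (hc1 c1 ^+ 2 * k ^+ 2) / 2| <= eps / 2 * N.
  have k2_le : k ^+ 2 <= N ^+ 2.
    by rewrite -real_normK ?num_real//; apply: lerXn2r; rewrite ?nnegrE.
  have : N * (2 * (hc1 c1 ^+ 2 + 1)) < eps by rewrite -ltr_pdivlMr.
  have := sqr_ge0 (hc1 c1); have := sqr_ge0 k.
  by rewrite ler0_norm; nra.
have lin_le : `|p * (b1 (m1 + h) (bc1 c1 * m2 + bc1 c1 * k) - b1 m1 (bc1 c1 * m2)
    - pd1 b1 m1 (bc1 c1 * m2) * h - pd2 b1 m1 (bc1 c1 * m2) * (bc1 c1 * k))|
    <= eps / 2 * N.
  rewrite normrM -/rem.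
  set e' := eps / (2 * K) in eps'_gt0 rem_le *.
  have pB_le_K : `|p| * (1 + B) <= K by rewrite /K; lra.
  have hBk_le : `|h| + B * `|k| <= (1 + B) * N by have := normr_ge0 k; nra.
  have rem_le' : rem <= e' * ((1 + B) * N).
    exact: le_trans rem_le (ler_wpM2l (ltW eps'_gt0) hBk_le).
  apply: (le_trans (ler_wpM2l (normr_ge0 p) rem_le')).
  have -> : eps / 2 * N = e' * N * K by rewrite /e'; field; rewrite gt_eqF.
  have -> : `|p| * (e' * ((1 + B) * N)) = e' * N * (`|p| * (1 + B)) by ring.
  by apply: ler_wpM2l pB_le_K; exact: mulr_ge0 (ltW _) N_ge0.
lra.
Qed.

Lemma dHhat_m1_affine_x p m1 m2 x :
  derivable (fun y => dHhat_m1 y p m1 m2) x 1 /\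
  derive1 (fun y => dHhat_m1 y p m1 m2) x = c2.
Proof.
by apply: (derive1_affine _ _ (dHhat_m1 0 p m1 m2)) => y; rewrite /dHhat_m1; ring.
Qed.

Lemma dHhat_m1_affine_p x m1 m2 p :
  derivable (fun q => dHhat_m1 x q m1 m2) p 1 /\
  derive1 (fun q => dHhat_m1 x q m1 m2) p = pd1 b1 m1 (bc1 c1 * m2).
Proof.
by apply: (derive1_affine _ _ (dHhat_m1 x 0 m1 m2)) => q; rewrite /dHhat_m1; ring.
Qed.

Lemma dHhat_m2_affine_x p m1 m2 x :
  derivable (fun y => dHhat_m2 y p m1 m2) x 1 /\
  derive1 (fun y => dHhat_m2 y p m1 m2) x = hc3 c1 c3.
Proof.
by apply: (derive1_affine _ _ (dHhat_m2 0 p m1 m2)) => y; rewrite /dHhat_m2; ring.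
Qed.

Lemma dHhat_m2_affine_p x m1 m2 p :
  derivable (fun q => dHhat_m2 x q m1 m2) p 1 /\
  derive1 (fun q => dHhat_m2 x q m1 m2) p = bc1 c1 * pd2 b1 m1 (bc1 c1 * m2) - hc1 c1.
Proof.
by apply: (derive1_affine _ _ (dHhat_m2 x 0 m1 m2)) => q; rewrite /dHhat_m2; ring.
Qed.

Lemma derive1_Hhat_p x rho p :
  derivable (fun q => Hhat c1 c2 c3 b1 b2 f1 x q rho) p 1 /\
  derive1 (fun q => Hhat c1 c2 c3 b1 b2 f1 x q rho) p =
    - p + (b1 (mean1 rho) (bc1 c1 * mean2 rho) + b2 x - hc1 c1 * mean2 rho).
Proof.
set b := _ - hc1 c1 * mean2 rho.
set c := - (hc1 c1 * mean2 rho) ^+ 2 / 2 + c2 * x * mean1 rho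
  + hc3 c1 c3 * x * mean2 rho + f1 x.
have HE q : Hhat c1 c2 c3 b1 b2 f1 x q rho = (- 1 / 2) * q ^+ 2 + b * q + c.
  by rewrite /Hhat /b /c; field.
by have [? ->] := derive1_quadratic _ _ _ _ p HE; split => //; field.
Qed.

Lemma derive2_Hhat_p x rho p :
  derivable (fun q => derive1 (fun q' => Hhat c1 c2 c3 b1 b2 f1 x q' rho) q) p 1 /\
  derive1 (fun q => derive1 (fun q' => Hhat c1 c2 c3 b1 b2 f1 x q' rho) q) p = -1.
Proof.
apply: (derive1_affine _ _
  (b1 (mean1 rho) (bc1 c1 * mean2 rho) + b2 x - hc1 c1 * mean2 rho)) => q.
by rewrite (derive1_Hhat_p x rho q).2 mulN1r.
Qed.

End HhatMeans.

Section LionsDerivative.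
Context {R : realType} {d : measure_display} {Om : measurableType d}.
Variable P : probability Om R.
Variables (c1 c2 c3 : R) (b1 : R -> R -> R) (b2 f1 : R -> R).

Lemma integral_cst_sqr_lty (rho : probability (R * R)%type R) (k : R) :
  (\int[rho]_z (k ^+ 2)%:E < +oo)%E.
Proof. by rewrite integral_cst// [_ setT]probability_setT mule1 ltry. Qed.

Lemma LionsDer_Hhat x p rho : C1_2 b1 ->
  LionsDer P (fun r => Hhat c1 c2 c3 b1 b2 f1 x p r) rho
    (fun=> dHhat_m1 c1 c2 b1 x p (mean1 rho) (mean2 rho))
    (fun=> dHhat_m2 c1 c3 b1 x p (mean1 rho) (mean2 rho)).
Proof.
move=> C1b1; split; [exact: measurable_cst | exact: measurable_cst
  | exact: integral_cst_sqr_lty | exact: integral_cst_sqr_lty | ].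
move=> X Y L2X L2Y law eps eps_gt0.
have [delta delta_gt0 first_order] :=
  Hhat_means_first_order c1 c2 c3 b1 b2 f1 x p (mean1 rho) (mean2 rho) C1b1 _ eps_gt0.
exists delta => // H1 H2 L2H1 L2H2 H_lt_delta rho' law'.
have iX := L2_integrable P L2X; have iY := L2_integrable P L2Y.
have iH1 := L2_integrable P L2H1; have iH2 := L2_integrable P L2H2.
have mean1E : mean1 rho' = mean1 rho + Ex P H1.
  rewrite (mean1_law P (integrable_add P iX iH1) (integrable_add P iY iH2) law').
  by rewrite (mean1_law P iX iY law) ExD.
have mean2E : mean2 rho' = mean2 rho + Ex P H2.
  rewrite (mean2_law P (integrable_add P iX iH1) (integrable_add P iY iH2) law').
  by rewrite (mean2_law P iX iY law) ExD.
rewrite !Hhat_meansE mean1E mean2E ExD ?ExZ//; try exact: integrable_scale.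
apply: first_order => //; first exact: normr_Ex_le_normL2.
by rewrite normL2C; exact: normr_Ex_le_normL2.
Qed.

End LionsDerivative.

Section LLH.
Context {R : realType}.

Lemma condmat_psd_quadratic (c1 c2 c3 : R) b1 m1 m2 :
  psd3 (condmat c1 c2 c3 b1 m1 m2) ->
  let k := bc1 c1 * pd2 b1 m1 m2 - hc1 c1 in
  let u := pd1 b1 m1 m2 in
  forall z g e : R, 0 <= (1 - k) * z ^+ 2 + k * g ^+ 2 + c2 * e ^+ 2
                         + (hc3 c1 c3 + u) * e * g + (hc3 c1 c3 - u) * e * z.
Proof.
move=> psd k u z g e; have := psd (\col_(i < 3) nth 0 [:: z; g; e] i).
rewrite !mxE !big_ord_recr big_ord0 /= !mxE !big_ord_recr !big_ord0 /= !mxE /=.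
by congr (_ <= _); rewrite /k /u; field.
Qed.

Context {d : measure_display} {Om : measurableType d}.
Variable P : probability Om R.

Lemma LLH_constant_coefficients (c2 h k u : R) (xi eta gam zet : Om -> R)
    (Hpp : R -> R) (Hxr1 Hxr2 Hpr1 Hpr2 : R -> R -> R) :
  L2 P eta -> L2 P gam -> L2 P zet ->
  (forall z g e : R, 0 <= (1 - k) * z ^+ 2 + k * g ^+ 2 + c2 * e ^+ 2
                            + (h + u) * e * g + (h - u) * e * z) ->
  (forall x, Hpp x = -1) -> (forall x y, Hxr1 x y = c2) -> (forall x y, Hxr2 x y = h) ->
  (forall x y, Hpr1 x y = u) -> (forall x y, Hpr2 x y = k) ->
  Ex P (fun w => Ex P (fun w' =>
      zet w * Hpp (xi w) * zet w
    - eta w * (Hxr1 (xi w) (xi w') * eta w' + Hxr2 (xi w) (xi w') * (gam w' + zet w'))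
    - (gam w - zet w) * (Hpr1 (xi w) (xi w') * eta w'
                         + Hpr2 (xi w) (xi w') * (gam w' + zet w')))) <= 0.
Proof.
move=> L2eta L2gam L2zet psd Hpp_cst Hxr1_cst Hxr2_cst Hpr1_cst Hpr2_cst.
have ieta := L2_integrable P L2eta; have igam := L2_integrable P L2gam.
have izet := L2_integrable P L2zet; have izet2 := L2_integrable_sqr P L2zet.
set e := Ex P eta; set g := Ex P gam; set z := Ex P zet.
have inner w : Ex P (fun w' =>
      zet w * Hpp (xi w) * zet w
    - eta w * (Hxr1 (xi w) (xi w') * eta w' + Hxr2 (xi w) (xi w') * (gam w' + zet w'))
    - (gam w - zet w) * (Hpr1 (xi w) (xi w') * eta w'
                         + Hpr2 (xi w) (xi w') * (gam w' + zet w'))) =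
    0 + (-1) * zet w ^+ 2 + (- (c2 * e + h * (g + z))) * eta w
    + (- (u * e + k * (g + z))) * gam w + (u * e + k * (g + z)) * zet w.
  rewrite (_ : (fun w' => _) = fun w' : Om =>
      - zet w ^+ 2 + 0 * eta w' + (- (c2 * eta w + u * (gam w - zet w))) * eta w'
      + (- (h * eta w + k * (gam w - zet w))) * gam w'
      + (- (h * eta w + k * (gam w - zet w))) * zet w' : R); last first.
    by apply/funext => w'; rewrite Hpp_cst Hxr1_cst Hxr2_cst Hpr1_cst Hpr2_cst; ring.
  by rewrite Ex_affine// -/e -/g -/z; ring.
rewrite (eq_fun inner) Ex_affine// -/e -/g -/z.
have := sqr_Ex_le P L2zet; have := psd z g e; rewrite -/z; nra.
Qed.

End LLH.

Theorem mainTheorem4 (R : realType) (d : measure_display) (Om : measurableType d)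
  (P : probability Om R) (c1 c2 c3 : R) (b1 : R -> R -> R) (b2 f1 : R -> R) :
  atomless P ->
  0 < c1 -> c1 < 1 -> 0 < c2 -> 0 < c3 ->
  C1_2 b1 -> C1 b2 -> C1 f1 ->
  (forall m1 m2 : R, psd3 (condmat c1 c2 c3 b1 m1 m2)) ->
  [/\
    (forall (x p : R) (nu : probability (R * R)%type R), P2 nu ->
       exists! a : R, is_minimizer (hobj c1 c2 c3 b1 b2 f1 x p nu) a),
    (forall xi eta : Om -> R, L2 P xi -> L2 P eta -> sigma_meas xi eta ->
       (exists nu : probability (R * R)%type R,
          P2 nu /\ is_law P xi (fun w => hc1 c1 * Ex P eta + eta w) nu) /\
       (forall nu : probability (R * R)%type R, P2 nu ->
        forall alpha : Om -> R,
          (forall w, is_minimizer (hobj c1 c2 c3 b1 b2 f1 (xi w) (eta w) nu) (alpha w)) ->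
          (is_law P xi alpha nu <->
           is_law P xi (fun w => hc1 c1 * Ex P eta + eta w) nu))),
    (forall (xi eta : Om -> R) (rho nu : probability (R * R)%type R),
       L2 P xi -> L2 P eta -> sigma_meas xi eta ->
       is_law P xi eta rho ->
       is_law P xi (fun w => hc1 c1 * Ex P eta + eta w) nu ->
       forall x p : R, Hinf c1 c2 c3 b1 b2 f1 x p nu = Hhat c1 c2 c3 b1 b2 f1 x p rho) &
    exists D1 D2 : R -> R -> probability (R * R)%type R -> R -> R -> R,
    [/\ (forall (x p : R) (rho : probability (R * R)%type R), P2 rho ->
           LionsDer P (fun r => Hhat c1 c2 c3 b1 b2 f1 x p r) rho
             (fun z => D1 x p rho z.1 z.2) (fun z => D2 x p rho z.1 z.2)),
        (forall (x p : R) (rho : probability (R * R)%type R) (xt pt : R), P2 rho ->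
           [/\ derivable (fun y => D1 y p rho xt pt) x 1,
               derivable (fun q => D1 x q rho xt pt) p 1,
               derivable (fun y => D2 y p rho xt pt) x 1 &
               derivable (fun q => D2 x q rho xt pt) p 1]),
        (forall (x p : R) (rho : probability (R * R)%type R), P2 rho ->
           derivable (fun q => Hhat c1 c2 c3 b1 b2 f1 x q rho) p 1 /\
           derivable (fun q => derive1 (fun q' => Hhat c1 c2 c3 b1 b2 f1 x q' rho) q) p 1) &
        (forall phi : R -> R, Lipschitz phi ->
         forall xi eta gam zet : Om -> R,
           L2 P xi -> L2 P eta -> L2 P gam -> L2 P zet ->
         forall rho : probability (R * R)%type R,
           is_law P xi (fun w => phi (xi w)) rho ->
         let Hpp := fun x : R =>
           derive1 (fun q => derive1 (fun q' => Hhat c1 c2 c3 b1 b2 f1 x q' rho) q) (phi x) in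
         let Hxr1 := fun x xt : R => derive1 (fun y => D1 y (phi x) rho xt (phi xt)) x in
         let Hxr2 := fun x xt : R => derive1 (fun y => D2 y (phi x) rho xt (phi xt)) x in
         let Hpr1 := fun x xt : R => derive1 (fun q => D1 x q rho xt (phi xt)) (phi x) in
         let Hpr2 := fun x xt : R => derive1 (fun q => D2 x q rho xt (phi xt)) (phi x) in
         Ex P (fun w => Ex P (fun w' =>
             zet w * Hpp (xi w) * zet w
           - eta w * (Hxr1 (xi w) (xi w') * eta w'
                      + Hxr2 (xi w) (xi w') * (gam w' + zet w'))
           - (gam w - zet w) * (Hpr1 (xi w) (xi w') * eta w'
                      + Hpr2 (xi w) (xi w') * (gam w' + zet w')))) <= 0)]].
Proof.
move=> _ _ c1_lt1 _ _ C1b1 _ _ psd.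
have c1_neq1 : c1 != 1 by rewrite lt_eqF.
split.
- by move=> x p nu _; exact: unique_minimizer_hobj.
- move=> xi eta L2xi L2eta _; split.
    exact: exists_law P _ _ L2xi (L2_addl P _ _ L2eta).
  by move=> nu _ alpha; exact: minimizer_law_fixed_point.
- by move=> xi eta rho nu L2xi L2eta _; exact: Hinf_Phi_Hhat.
exists (fun x p rho _ _ => dHhat_m1 c1 c2 b1 x p (mean1 rho) (mean2 rho)).
exists (fun x p rho _ _ => dHhat_m2 c1 c3 b1 x p (mean1 rho) (mean2 rho)).
split.
- by move=> x p rho _; exact: LionsDer_Hhat.
- by move=> x p rho _ _ _; split;
    [ exact: (dHhat_m1_affine_x _ _ _ _ _ _ _).1 | exact: (dHhat_m1_affine_p _ _ _ _ _ _ _).1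
    | exact: (dHhat_m2_affine_x _ _ _ _ _ _ _).1 | exact: (dHhat_m2_affine_p _ _ _ _ _ _ _).1].
- by move=> x p rho _; split; [exact: (derive1_Hhat_p _ _ _ _ _ _ _ _ _).1
    | exact: (derive2_Hhat_p _ _ _ _ _ _ _ _ _).1].
move=> phi _ xi eta gam zet _ L2eta L2gam L2zet rho _; cbv zeta.
set m1 := mean1 rho; set m2 := mean2 rho.
apply: (LLH_constant_coefficients P c2 (hc3 c1 c3)
  (bc1 c1 * pd2 b1 m1 (bc1 c1 * m2) - hc1 c1) (pd1 b1 m1 (bc1 c1 * m2))
  xi eta gam zet _ _ _ _ _ L2eta L2gam L2zet) => [|x|x _|x _|x _|x _].
- exact: condmat_psd_quadratic (psd m1 (bc1 c1 * m2)).
- exact: (derive2_Hhat_p _ _ _ _ _ _ _ _ _).2.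
- exact: (dHhat_m1_affine_x _ _ _ _ _ _ _).2.
- exact: (dHhat_m2_affine_x _ _ _ _ _ _ _).2.
- exact: (dHhat_m1_affine_p _ _ _ _ _ _ _).2.
- exact: (dHhat_m2_affine_p _ _ _ _ _ _ _).2.
Qed.
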